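(* For $0<a<b$ and $y>0$ let $R_{a,b}(y)$ be the number of pairs of nonnegative integers $(\ell,p)$ with $a\ell+bp\le y$. Then $$\frac{y^2}{2ab}+\frac{y}{2a}\le R_{a,b}(y)\le \frac{y^2}{2ab}+\frac{y}{2a}+\frac{y}{b}+\frac{b}{8a}+1.$$ *)

From Stdlib Require Import Reals List.
Open Scope R_scope.

Definition in_region (a b y : R) (l p : nat) : nat :=
  if Rle_dec (a * INR l + b * INR p) y then 1%nat else 0%nat.

(* Search bound: any admissible (l,p) with a,b>0, y>0 satisfies
   l <= y/a and p <= y/b, so both are < bound a b y. *)
Definition bound (a b y : R) : nat :=
  (Z.to_nat (up (y / a)) + Z.to_nat (up (y / b)) + 1)%nat.

(* R_{a,b}(y) = #{(l,p) in N^2 | a l + b p <= y}, counted over the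
   finite box [0, bound) x [0, bound), which contains all such pairs
   when a, b > 0. *)
Definition lattice_count (a b y : R) : nat :=
  let N := bound a b y in
  fold_right Nat.add 0%nat
    (map (fun l => fold_right Nat.add 0%nat
                     (map (fun p => in_region a b y l p) (seq 0 N)))
         (seq 0 N)).

(* For fixed p with b p <= y the admissible l form an initial segment of
   length r_p with y - b p < a r_p <= y - b p + a, and no p with b p > y
   contributes.  Summing over p < k, where t := b k - y lies in (0, b], pins
   a R_{a,b}(y) between k y - b k (k - 1) / 2 and that plus a k; after
   substituting b k = y + t the two estimates reduce to t (b - t) >= 0 and
   (t - b/2)^2 + 2 a (b - t) >= 0. *)
From Pilot Require Import Defs.
From Stdlib Require Import Reals.
From Stdlib Require Import Lra Lia Psatz List ZArith.
Open Scope R_scope.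

Definition sum_upto (f : nat -> nat) (n : nat) : nat := list_sum (map f (seq 0 n)).

Lemma sum_upto_S (f : nat -> nat) (n : nat) : sum_upto f (S n) = (sum_upto f n + f n)%nat.
Proof.
  unfold sum_upto. rewrite seq_S, map_app, list_sum_app. simpl. lia.
Qed.

Lemma eq_sum_upto (f g : nat -> nat) (n : nat) :
  (forall i, f i = g i) -> sum_upto f n = sum_upto g n.
Proof.
  intros Hfg. induction n as [|n IH]; [reflexivity|]. now rewrite !sum_upto_S, IH, Hfg.
Qed.

Lemma sum_upto_add (f g : nat -> nat) (n : nat) :
  sum_upto (fun i => f i + g i)%nat n = (sum_upto f n + sum_upto g n)%nat.
Proof. induction n as [|n IH]; [reflexivity|]. rewrite !sum_upto_S, IH. lia. Qed.

Lemma sum_upto_comm (f : nat -> nat -> nat) (n m : nat) :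
  sum_upto (fun i => sum_upto (fun j => f i j) m) n =
  sum_upto (fun j => sum_upto (fun i => f i j) n) m.
Proof.
  induction n as [|n IH].
  - symmetry. induction m as [|m IHm]; [reflexivity|]. now rewrite sum_upto_S, IHm.
  - rewrite sum_upto_S, IH, <- sum_upto_add.
    apply eq_sum_upto. intros j. now rewrite sum_upto_S.
Qed.

Lemma sum_upto_vanishing_tail (f : nat -> nat) (k n : nat) :
  (forall i, (k <= i)%nat -> f i = 0%nat) -> (k <= n)%nat -> sum_upto f n = sum_upto f k.
Proof.
  intros Hf Hkn. induction Hkn as [|n Hkn IH]; [reflexivity|].
  rewrite sum_upto_S, IH, Hf by exact Hkn. lia.
Qed.

Section DownwardClosedCount.

Variable P : nat -> Prop.
Variable P_dec : forall i, {P i} + {~ P i}.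
Hypothesis P_down : forall i, P (S i) -> P i.

Definition count_upto (n : nat) : nat :=
  sum_upto (fun i => if P_dec i then 1%nat else 0%nat) n.

Lemma downward_closed_le (i j : nat) : (i <= j)%nat -> P j -> P i.
Proof. intros Hij. induction Hij as [|j Hij IH]; auto. Qed.

Lemma count_upto_initial_segment (n : nat) :
  (count_upto n <= n)%nat /\ (forall i, (i < n)%nat -> (P i <-> (i < count_upto n)%nat)).
Proof.
  unfold count_upto. induction n as [|n [Hle IH]].
  - split; [reflexivity | lia].
  - rewrite sum_upto_S. set (s := sum_upto _ n) in *.
    destruct (P_dec n) as [Hn|Hn].
    + assert (Hs : s = n).
      { destruct (Nat.eq_dec s n) as [|Hsn]; [assumption|].
        exfalso. assert (Hs : P s) by (apply (downward_closed_le s n); [lia | exact Hn]).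
        apply (IH s) in Hs; lia. }
      split; [lia|]. intros i Hi. split; [lia|]. intros _.
      apply (downward_closed_le i n); [lia | exact Hn].
    + split; [lia|]. intros i Hi.
      destruct (Nat.eq_dec i n) as [->|Hin]; [split; [tauto | lia]|].
      rewrite (IH i) by lia. lia.
Qed.

End DownwardClosedCount.

Definition row_count (a c y : R) (n : nat) : nat :=
  count_upto (fun l => a * INR l + c <= y) (fun l => Rle_dec (a * INR l + c) y) n.

Lemma row_count_initial_segment (a c y : R) (n : nat) : 0 < a ->
  (row_count a c y n <= n)%nat /\
  (forall l, (l < n)%nat -> (a * INR l + c <= y <-> (l < row_count a c y n)%nat)).
Proof.
  intros ha. apply count_upto_initial_segment.
  intros l. rewrite S_INR. lra.
Qed.

Lemma row_count_bounds (a c y : R) (n : nat) :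
  0 < a -> c <= y -> y - c < a * INR n ->
  y - c < a * INR (row_count a c y n) <= y - c + a.
Proof.
  intros ha hc hn. destruct (row_count_initial_segment a c y n ha) as [Hle Hseg].
  set (r := row_count a c y n) in *. split.
  - destruct (Nat.eq_dec r n) as [->|Hrn]; [exact hn|].
    assert (Hr : ~ a * INR r + c <= y) by (rewrite (Hseg r) by lia; lia). lra.
  - destruct r as [|r]; [simpl; lra|].
    assert (Hr : a * INR r + c <= y) by (apply Hseg; lia).
    rewrite S_INR. lra.
Qed.

Lemma row_count_empty (a c y : R) (n : nat) : 0 < a -> y < c -> row_count a c y n = 0%nat.
Proof.
  intros ha hc. destruct (row_count_initial_segment a c y n ha) as [Hle Hseg].
  destruct (row_count a c y n) as [|r] eqn:Hr; [reflexivity|].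
  exfalso. assert (H0 : a * INR 0 + c <= y) by (apply Hseg; lia). simpl in H0. lra.
Qed.

Lemma sum_row_counts_bounds (a b y : R) (n k : nat) :
  0 < a -> 0 <= b -> y < a * INR n -> b * INR k <= y + b ->
  INR k * y - b * INR k * (INR k - 1) / 2
    <= a * INR (sum_upto (fun p => row_count a (b * INR p) y n) k) <=
  INR k * y - b * INR k * (INR k - 1) / 2 + a * INR k.
Proof.
  intros ha hb hn. induction k as [|k IH]; intros hk.
  - simpl. lra.
  - rewrite S_INR in hk. rewrite sum_upto_S, plus_INR, S_INR.
    assert (Hk0 : 0 <= INR k) by apply pos_INR.
    destruct (row_count_bounds a (b * INR k) y n) as [Hr1 Hr2]; [exact ha | nra | nra |].
    destruct IH as [IH1 IH2]; [nra|].
    nra.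
Qed.

Lemma lattice_count_as_row_sum (a b y : R) :
  lattice_count a b y =
  sum_upto (fun p => row_count a (b * INR p) y (Defs.bound a b y)) (Defs.bound a b y).
Proof. exact (sum_upto_comm (in_region a b y) (Defs.bound a b y) (Defs.bound a b y)). Qed.

Lemma row_sum_lower_estimate (a b y k T : R) :
  0 < a -> 0 < b -> y < b * k <= y + b ->
  k * y - b * k * (k - 1) / 2 <= a * T ->
  y ^ 2 / (2 * a * b) + y / (2 * a) <= T.
Proof.
  intros ha hb [hk1 hk2] hT.
  assert (Ht : 0 <= (b * k - y) * (b - (b * k - y))) by (apply Rmult_le_pos; lra).
  assert (H2 : y ^ 2 + b * y <= 2 * b * (a * T)) by nra.
  assert (E : T - (y ^ 2 / (2 * a * b) + y / (2 * a)) =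
              (2 * b * (a * T) - (y ^ 2 + b * y)) / (2 * a * b)) by (field; lra).
  assert (0 <= (2 * b * (a * T) - (y ^ 2 + b * y)) / (2 * a * b))
    by (apply Rle_mult_inv_pos; nra).
  lra.
Qed.

Lemma row_sum_upper_estimate (a b y k T : R) :
  0 < a -> 0 < b -> y < b * k <= y + b ->
  a * T <= k * y - b * k * (k - 1) / 2 + a * k ->
  T <= y ^ 2 / (2 * a * b) + y / (2 * a) + y / b + b / (8 * a) + 1.
Proof.
  intros ha hb [hk1 hk2] hT.
  assert (Hsq : 0 <= (b * k - y - b / 2) ^ 2) by apply pow2_ge_0.
  assert (Ht : 0 <= 2 * a * (b - (b * k - y))) by (apply Rmult_le_pos; lra).
  assert (H2 : 2 * b * (a * T) <= y ^ 2 + b * y + 2 * a * y + b ^ 2 / 4 + 2 * a * b)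
    by nra.
  assert (E : y ^ 2 / (2 * a * b) + y / (2 * a) + y / b + b / (8 * a) + 1 - T =
              (y ^ 2 + b * y + 2 * a * y + b ^ 2 / 4 + 2 * a * b - 2 * b * (a * T))
                / (2 * a * b)) by (field; lra).
  assert (0 <= (y ^ 2 + b * y + 2 * a * y + b ^ 2 / 4 + 2 * a * b - 2 * b * (a * T))
                / (2 * a * b)) by (apply Rle_mult_inv_pos; nra).
  lra.
Qed.

Lemma INR_to_nat_up (z : R) : 0 < z -> z < INR (Z.to_nat (up z)) <= z + 1.
Proof.
  intros hz. destruct (archimed z) as [H1 H2].
  assert (Hup : (0 < up z)%Z) by (apply lt_IZR; lra).
  rewrite INR_IZR_INZ, Z2Nat.id by lia. lra.
Qed.

Lemma mul_INR_to_nat_up_div (c y : R) :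
  0 < c -> 0 < y -> y < c * INR (Z.to_nat (up (y / c))) <= y + c.
Proof.
  intros hc hy. destruct (INR_to_nat_up (y / c)) as [H1 H2].
  { apply Rdiv_lt_0_compat; lra. }
  assert (E : y = c * (y / c)) by (field; lra).
  split; [rewrite E at 1 | rewrite E at 2]; nra.
Qed.

Theorem proposition2p5 (a b y : R) (ha : 0 < a) (hab : a < b) (hy : 0 < y) :
  y ^ 2 / (2 * a * b) + y / (2 * a) <= INR (lattice_count a b y) /\
  INR (lattice_count a b y) <=
    y ^ 2 / (2 * a * b) + y / (2 * a) + y / b + b / (8 * a) + 1.
Proof.
  assert (hb : 0 < b) by lra.
  set (n := Defs.bound a b y).
  set (k := Z.to_nat (up (y / b))).
  assert (hk : y < b * INR k <= y + b) by exact (mul_INR_to_nat_up_div b y hb hy).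
  assert (hn : y < a * INR n).
  { destruct (mul_INR_to_nat_up_div a y ha hy) as [H _].
    assert (INR (Z.to_nat (up (y / a))) <= INR n) by (apply le_INR; unfold n, Defs.bound; lia).
    nra. }
  assert (Hempty : forall p, (k <= p)%nat -> row_count a (b * INR p) y n = 0%nat).
  { intros p Hp. apply row_count_empty; [exact ha|].
    assert (INR k <= INR p) by (apply le_INR; exact Hp). nra. }
  rewrite lattice_count_as_row_sum. fold n.
  rewrite (sum_upto_vanishing_tail _ k n Hempty) by (unfold n, Defs.bound, k; lia).
  destruct (sum_row_counts_bounds a b y n k) as [Hlo Hhi]; [lra | lra | exact hn | lra |].
  split.
  - exact (row_sum_lower_estimate a b y (INR k) _ ha hb hk Hlo).
  - exact (row_sum_upper_estimate a b y (INR k) _ ha hb hk Hhi).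
Qed.
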